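(* Let $R$ be a ring, $M$ a Tate $R$-module and $T\in\operatorname{End}M$ a continuous endomorphism. The following are equivalent: (i) $T^n\to0$ as $n\to\infty$, meaning that for all lattices $L,L'\subset M$ there exists $N$ such that $T^nL'\subset L$ for all $n>N$; (ii) there exists a (unique) structure of topological $R[[t]]$-module on $M$ (extending its topological $R$-module structure, $R[[t]]$ having the $t$-adic topology) such that $T$ acts as multiplication by $t$.
   Context: A Tate $R$-module is a topological direct summand of $P\oplus Q^*$ with $P$ a discrete projective left $R$-module, $Q$ a discrete projective right $R$-module and $Q^*=\operatorname{Hom}_R(Q,R)$ with the topology of pointwise convergence. A lattice in $M$ is an open submodule $L$ such that $L/U$ is finitely generated for every open submodule $U\subset L$. *)

From HB Require Import structures.
From mathcomp Require Import all_boot all_algebra.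

Set Implicit Arguments.
Unset Strict Implicit.
Unset Printing Implicit Defensive.

Import GRing.Theory.
Local Open Scope ring_scope.

(* [op] is a topology on [T]: open sets are stable under extensional
   equality, the whole space is open, finite intersections and arbitrary
   unions of opens are open (so the empty set, the empty union, is open). *)
Definition topology (T : Type) (op : (T -> Prop) -> Prop) : Prop :=
  [/\ forall U V : T -> Prop, (forall x, U x <-> V x) -> op U -> op V,
      op (fun _ => True),
      forall U V, op U -> op V -> op (fun x => U x /\ V x) &
      forall F : (T -> Prop) -> Prop, (forall U, F U -> op U) ->
        op (fun x => exists2 U, F U & U x)].

Definition cont (A B : Type) (opA : (A -> Prop) -> Prop)
  (opB : (B -> Prop) -> Prop) (f : A -> B) : Prop :=
  forall V, opB V -> opA (fun x => V (f x)).

Definition cont_on (A B : Type) (opA : (A -> Prop) -> Prop) (X : A -> Prop)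
  (opB : (B -> Prop) -> Prop) (f : A -> B) : Prop :=
  forall V, opB V -> exists2 U, opA U & forall x, X x -> (U x <-> V (f x)).

Definition discrete_top (T : Type) : (T -> Prop) -> Prop := fun _ => True.

Definition prod_top (A B : Type) (opA : (A -> Prop) -> Prop)
  (opB : (B -> Prop) -> Prop) : (A * B -> Prop) -> Prop :=
  fun W => forall x, W x -> exists U, exists V,
     [/\ opA U, opB V, U x.1, V x.2 & forall y, U y.1 -> V y.2 -> W y].

(* topology of pointwise convergence on maps [Q -> S], [S] discrete *)
Definition pointwise_top (Q : eqType) (S : Type) : ((Q -> S) -> Prop) -> Prop :=
  fun W => forall f, W f -> exists qs : seq Q,
     forall g, (forall q, q \in qs -> g q = f q) -> W g.

Definition top_lmod (S : pzRingType) (M : lmodType S)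
  (op : (M -> Prop) -> Prop) : Prop :=
  [/\ topology op,
      cont (prod_top op op) op (fun x : M * M => x.1 + x.2),
      cont op op (fun x : M => - x) &
      cont (prod_top (@discrete_top S) op) op (fun x : S * M => x.1 *: x.2)].

Definition projective (S : pzRingType) (P : lmodType S) : Prop :=
  forall (A B : lmodType S) (g : {linear A -> B}) (h : {linear P -> B}),
    (forall b, exists a, g a = b) ->
    exists k : {linear P -> A}, forall x, g (k x) = h x.

(* right R-modules are left R^c-modules; for [Q : lmodType R^c],
   [r *: q] is the right action q.r.  [rdual f] : f is an element of
   Q^* = Hom_R(Q, R) (right R-linear). *)
Definition rdual (R : pzRingType) (Q : lmodType R^c) (f : Q -> R) : Prop :=
  forall (r : R^c) (x y : Q), f (r *: x + y) = f x * (r : R) + f y.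

(* left R-module operations on P (+) Q^*, represented inside P * (Q -> R);
   (r.f)(q) = r * f q *)
Definition ts_add (R : pzRingType) (P : lmodType R) (Q : Type)
  (x y : P * (Q -> R)) : P * (Q -> R) := (x.1 + y.1, fun q => x.2 q + y.2 q).
Definition ts_scale (R : pzRingType) (P : lmodType R) (Q : Type)
  (r : R) (x : P * (Q -> R)) : P * (Q -> R) := (r *: x.1, fun q => r * x.2 q).

(* Tate R-module: a topological direct summand (= continuous linear retract)
   of P (+) Q^*, P discrete projective left module, Q discrete projective
   right module, Q^* with the topology of pointwise convergence. *)
Definition tate (R : pzRingType) (M : lmodType R) (op : (M -> Prop) -> Prop)
  : Prop :=
  top_lmod op /\
  exists (P : lmodType R) (Q : lmodType R^c)
         (i : M -> P * (Q -> R)) (p : P * (Q -> R) -> M),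
  [/\ projective P, projective Q,
      (forall m, rdual (i m).2),
      (forall r m m', i (r *: m + m') = ts_add (ts_scale r (i m)) (i m')) &
      (forall r x y, rdual x.2 -> rdual y.2 ->
          p (ts_add (ts_scale r x) y) = r *: p x + p y)] /\
  [/\
      cont op (prod_top (@discrete_top P) (@pointwise_top Q R)) i,
      cont_on (prod_top (@discrete_top P) (@pointwise_top Q R))
              (fun x => rdual x.2) op p &
      forall m, p (i m) = m].

Definition submod (R : pzRingType) (M : lmodType R) (L : M -> Prop) : Prop :=
  [/\ L 0, forall x y, L x -> L y -> L (x + y) &
      forall (r : R) x, L x -> L (r *: x)].

(* L/U is a finitely generated R-module (U a submodule of L) *)
Definition fg_quot (R : pzRingType) (M : lmodType R) (L U : M -> Prop) : Prop :=
  exists xs : seq M, (forall x, x \in xs -> L x) /\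
    forall x, L x -> exists c : 'I_(size xs) -> R, exists2 u, U u &
      x = \sum_(i < size xs) c i *: nth 0 xs i + u.

Definition lattice (R : pzRingType) (M : lmodType R) (op : (M -> Prop) -> Prop)
  (L : M -> Prop) : Prop :=
  [/\ submod L, op L &
      forall U, submod U -> op U -> (forall x, U x -> L x) -> fg_quot L U].

Definition tends_to_zero (R : pzRingType) (M : lmodType R)
  (op : (M -> Prop) -> Prop) (T : M -> M) : Prop :=
  forall L L', lattice op L -> lattice op L' ->
    exists N : nat, forall n, (N < n)%N -> forall x, L' x -> L (iter n T x).

Definition pser_add (R : pzRingType) (f g : nat -> R) : nat -> R :=
  fun n => f n + g n.
Definition pser_mul (R : pzRingType) (f g : nat -> R) : nat -> R :=
  fun n => \sum_(i < n.+1) f i * g (n - i)%N.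
Definition pser_C (R : pzRingType) (r : R) : nat -> R :=
  fun n => if n == 0%N then r else 0.
Definition pser_one (R : pzRingType) : nat -> R := pser_C 1.
Definition pser_t (R : pzRingType) : nat -> R :=
  fun n => if n == 1%N then 1 else 0.

Definition tadic_top (R : pzRingType) : ((nat -> R) -> Prop) -> Prop :=
  fun W => forall f, W f -> exists N : nat,
    forall g, (forall n, (n < N)%N -> g n = f n) -> W g.

Definition pser_structure (R : pzRingType) (M : lmodType R)
  (op : (M -> Prop) -> Prop) (T : M -> M) (act : (nat -> R) -> M -> M) : Prop :=
  [/\ forall f x y, act f (x + y) = act f x + act f y,
      forall f g x, act (pser_add f g) x = act f x + act g x,
      forall f g x, act (pser_mul f g) x = act f (act g x),
      forall x, act (@pser_one R) x = x &
      forall r x, act (pser_C r) x = r *: x] /\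
  [/\
      forall x, act (@pser_t R) x = T x &
      cont (prod_top (@tadic_top R) op) op (fun z => act z.1 z.2)].

(* The topology of [M] is read through the embedding [i] into [P (+) Q^*]:
   the submodules [perp F = i^-1 (0 (+) F^perp)], for finite [F] in [Q], form a
   basis of neighbourhoods of 0, and [M], a retract of [P (+) Q^*], is complete
   for them.  A dual basis of the projective module [Q] shows that every
   [perp F] contains a lattice, and every lattice contains some [perp F].
   Hence [T^n -> 0] on lattices yields two properties: [T^n x -> 0] for every
   [x], and the family [(T^n)] is equicontinuous.  They make the series
   [sum f_n T^n x] converge, which defines the action of [f] in [R[[t]]]; it is
   continuous by equicontinuity, and unique because any such structure sends
   the truncations of [f] to the partial sums.  Conversely, continuity of a
   given action at [(0, 0)] makes [(T^n)] eventually equicontinuous; as a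
   lattice [L'] is finitely generated modulo the open submodule
   [L' /\ perp G], this gives [T^n L' <= L] for large [n]. *)

From HB Require Import structures.
From mathcomp Require Import all_boot all_algebra finmap.
From mathcomp.multinomials Require Import monalg.
From mathcomp Require Import zify.
From Stdlib Require Import ClassicalEpsilon FunctionalExtensionality.

Set Implicit Arguments.
Unset Strict Implicit.
Unset Printing Implicit Defensive.
Import GRing.Theory.
Local Open Scope ring_scope.

Section FreeLmodule.
Context (K : choiceType) (S : pzRingType).

(* [monalg] equips [malg] with a module structure only over non-trivial rings. *)
Definition free_lmod := malg K S.
HB.instance Definition _ := GRing.Zmodule.on free_lmod.

Definition free_scale (c : S) (g : free_lmod) : free_lmod :=
  \sum_(k <- msupp g) << c * g@_k *g k >>.

Lemma mcoeff_free_scale c g k : (free_scale c g)@_k = c * g@_k.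
Proof.
rewrite /free_scale {3}[g]monalgE !raddf_sum mulr_sumr.
by apply/eq_bigr=> /= i _; rewrite !mcoeffU mulrnAr.
Qed.

Lemma free_scaleA c1 c2 g :
  free_scale c1 (free_scale c2 g) = free_scale (c1 * c2) g.
Proof. by apply/malgP=> k; rewrite !mcoeff_free_scale mulrA. Qed.

Lemma free_scale1 g : free_scale 1 g = g.
Proof. by apply/malgP=> k; rewrite mcoeff_free_scale mul1r. Qed.

Lemma free_scaleDr c g1 g2 :
  free_scale c (g1 + g2) = free_scale c g1 + free_scale c g2.
Proof. by apply/malgP=> k; rewrite !(mcoeffD, mcoeff_free_scale) mulrDr. Qed.

Lemma free_scaleDl g c1 c2 :
  free_scale (c1 + c2) g = free_scale c1 g + free_scale c2 g.
Proof. by apply/malgP=> k; rewrite !(mcoeffD, mcoeff_free_scale) mulrDl. Qed.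

HB.instance Definition _ := GRing.Zmodule_isLmodule.Build S free_lmod
  free_scaleA free_scale1 free_scaleDr free_scaleDl.

Lemma mcoeffZ_free c (g : free_lmod) k : (c *: g)@_k = c * g@_k.
Proof. exact: mcoeff_free_scale. Qed.

End FreeLmodule.

Section DualBasis.
Context (S : pzRingType) (Q : lmodType S).

Definition lincomb (c : free_lmod Q S) : Q := \sum_(k <- msupp c) c@_k *: k.

Lemma lincomb_fsubset (c : free_lmod Q S) (D : {fset Q}) :
  (msupp c `<=` D)%fset -> lincomb c = \sum_(k <- D) c@_k *: k.
Proof.
move=> sub; apply: big_fset_incl => // x _ xn.
by rewrite mcoeff_outdom // scale0r.
Qed.

Lemma lincomb_is_linear : linear lincomb.
Proof.
move=> r c d; set D := (msupp (r *: c + d) `|` (msupp c `|` msupp d))%fset.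
have sub_c : (msupp c `<=` D)%fset by rewrite fsubsetU // fsubsetUl orbT.
have sub_d : (msupp d `<=` D)%fset by rewrite fsubsetU // fsubsetUr orbT.
rewrite !(@lincomb_fsubset _ D) ?fsubsetUl //.
rewrite scaler_sumr -big_split /=; apply: eq_bigr => k _.
by rewrite mcoeffD mcoeffZ_free scalerDl scalerA.
Qed.

HB.instance Definition _ :=
  GRing.isLinear.Build S (free_lmod Q S) Q *:%R lincomb lincomb_is_linear.

Lemma lincomb_unit (x : Q) : lincomb << 1 *g x >> = x.
Proof.
rewrite (@lincomb_fsubset _ [fset x]%fset) ?msuppU_le //.
by rewrite big_seq_fset1 mcoeffUU scale1r.
Qed.

Lemma projective_dual_basis : projective Q ->
  exists (phi : Q -> Q -> S) (supp : Q -> seq Q),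
   [/\ forall x, uniq (supp x),
       forall x j, j \notin supp x -> phi j x = 0,
       forall j r x y, phi j (r *: x + y) = r * phi j x + phi j y &
       forall x, x = \sum_(j <- supp x) phi j x *: j].
Proof.
move=> projQ.
have [k kK] := projQ _ _ lincomb idfun (fun x => ex_intro _ _ (lincomb_unit x)).
exists (fun j x => (k x)@_j), (fun x => enum_fset (msupp (k x))); split.
- by move=> x; apply: fset_uniq.
- by move=> x j /mcoeff_outdom.
- by move=> j r x y; rewrite linearP /= mcoeffD mcoeffZ_free.
- by move=> x; have /= e := kK x; rewrite -[in LHS]e.
Qed.

End DualBasis.

Section IterLinear.
Variables (R : pzRingType) (U : lmodType R) (f : {linear U -> U}).

Lemma iter_is_linear n : linear (iter n f).
Proof. by elim: n => [//|n ih] r x y /=; rewrite ih linearP. Qed.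

HB.instance Definition _ n :=
  GRing.isLinear.Build R U U *:%R (iter n f) (iter_is_linear n).

End IterLinear.

Section Submodules.
Variables (R : pzRingType) (M : lmodType R).
Implicit Types L U : M -> Prop.

Lemma fg_quot_seq L U (I : eqType) (i0 : I) (s : seq I) (f : I -> M) :
  (forall j, j \in s -> L (f j)) ->
  (forall x, L x -> exists c : I -> R, exists2 u, U u &
     x = \sum_(j <- s) c j *: f j + u) ->
  fg_quot L U.
Proof.
move=> Lf decomp; exists (map f s); split.
  by move=> _ /mapP[j js ->]; apply: Lf.
move=> x /decomp[c [u Uu ->]]; rewrite size_map.
exists (fun k => c (nth i0 s k)), u => //; congr (_ + _).
rewrite (big_nth i0) big_mkord; apply: eq_bigr => k _.
by rewrite (nth_map i0).
Qed.

Definition add_line L (x : M) : M -> Prop :=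
  fun m => exists l r, L l /\ m = l + r *: x.

Lemma add_line_submod L x : submod L -> submod (add_line L x).
Proof.
case=> L0 LD LZ; split.
- by exists 0, 0; rewrite scale0r addr0.
- move=> _ _ [l1 [r1 [Ll1 ->]]] [l2 [r2 [Ll2 ->]]]; exists (l1 + l2), (r1 + r2).
  by rewrite scalerDl addrACA; split; first apply: LD.
- move=> r _ [l [s [Ll ->]]]; exists (r *: l), (r * s).
  by rewrite scalerDr scalerA; split; first apply: LZ.
Qed.

Lemma submodI L U : submod L -> submod U -> submod (fun m => L m /\ U m).
Proof.
case=> L0 LD LZ [U0 UD UZ]; split=> //.
- by move=> x y [Lx Ux] [Ly Uy]; split; [apply: LD | apply: UD].
- by move=> r x [Lx Ux]; split; [apply: LZ | apply: UZ].
Qed.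

Lemma fg_quot_add_line L U x : L 0 ->
  fg_quot L (fun m => L m /\ U m) -> fg_quot (add_line L x) U.
Proof.
move=> L0 [xs [Lxs decomp]]; exists (x :: xs); split.
  move=> y; rewrite in_cons => /predU1P[->|xs_y].
    by exists 0, 1; rewrite scale1r add0r.
  by exists y, 0; rewrite scale0r addr0; split; first apply: Lxs.
move=> _ [l [r [Ll ->]]]; have [c [u [_ Uu] ->]] := decomp l Ll.
exists (fun k => if unlift ord0 k is Some k' then c k' else r), u => //.
rewrite big_ord_recl /= unlift_none addrC addrA; congr (_ + _ + _).
by apply: eq_bigr => k _; rewrite liftK.
Qed.

End Submodules.

Section RightDual.
Variables (R : pzRingType) (Q : lmodType R^c).

Lemma rdual0 (g : Q -> R) : rdual g -> g 0 = 0.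
Proof.
move=> gD; apply: (@addrI _ (g 0)); rewrite addr0.
by have := gD 1 0 0; rewrite scaler0 addr0 mulr1.
Qed.

Lemma rdual_sum (g : Q -> R) (s : seq Q) (c : Q -> R^c) :
  rdual g -> g (\sum_(j <- s) c j *: j) = \sum_(j <- s) g j * (c j : R).
Proof.
move=> gD; elim: s => [|j s ih]; first by rewrite !big_nil rdual0.
by rewrite !big_cons gD ih.
Qed.

End RightDual.

Section OpenSets.
Variables (T : Type) (op : (T -> Prop) -> Prop).
Hypothesis top : topology op.

Lemma open_ext U V : (forall x, U x <-> V x) -> op U -> op V.
Proof. by case: top => openE _ _ _; apply: openE. Qed.

Lemma open_and U V : op U -> op V -> op (fun x => U x /\ V x).
Proof. by case: top => _ _ openI _; apply: openI. Qed.

Lemma open_bigU (F : (T -> Prop) -> Prop) : (forall U, F U -> op U) ->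
  op (fun x => exists2 U, F U & U x).
Proof. by case: top => _ _ _ openU; apply: openU. Qed.

End OpenSets.

Definition eventually (A : nat -> Prop) :=
  exists N, forall n, (N <= n)%N -> A n.

Lemma eventually_and A B : eventually A -> eventually B ->
  eventually (fun n => A n /\ B n).
Proof.
move=> [N1 A_N1] [N2 B_N2]; exists (maxn N1 N2) => n.
by rewrite geq_max => /andP[n1 n2]; split; [apply: A_N1 | apply: B_N2].
Qed.

Lemma eventually_mono (A B : nat -> Prop) :
  (forall n, A n -> B n) -> eventually A -> eventually B.
Proof. by move=> AB [N A_N]; exists N => n /A_N /AB. Qed.

Lemma eventually_all (I : eqType) (s : seq I) (A : I -> nat -> Prop) :
  (forall j, j \in s -> eventually (A j)) ->
  eventually (fun n => forall j, j \in s -> A j n).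
Proof.
elim: s => [|j s ih] evA; first by exists 0.
have [|N /= AN] := eventually_and (evA j (mem_head _ _)) (ih _).
  by move=> k ks; apply: evA; rewrite in_cons ks orbT.
by exists N => n /AN[Ajn Asn] k; rewrite in_cons => /predU1P[->|/Asn].
Qed.

Section PowerSeries.
Variable R : pzRingType.
Implicit Types f g h : nat -> R.

Definition pser_mono (m : nat) (r : R) : nat -> R :=
  fun k => if k == m then r else 0.

Definition pser_trunc f (N : nat) : nat -> R :=
  fun k => if (k < N)%N then f k else 0.

Lemma pser_mul_mono f m r k :
  pser_mul f (pser_mono m r) k = if (m <= k)%N then f (k - m)%N * r else 0.
Proof.
rewrite /pser_mul; case: leqP => [mk | km].
  have km_lt : (k - m < k.+1)%N by rewrite ltnS leq_subr.
  rewrite (bigD1 (Ordinal km_lt)) //= /pser_mono subKn // eqxx big1 ?addr0 //.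
  move=> j /eqP j_ne; case: eqP => [kjm|_]; last by rewrite mulr0.
  by case: j_ne; apply: val_inj => /=; rewrite -kjm subKn // -ltnS.
apply: big1 => j _; rewrite /pser_mono; case: eqP => [kjm|_]; last first.
  by rewrite mulr0.
by move: km; rewrite -kjm ltnNge leq_subr.
Qed.

Lemma pser_mulDr f g h :
  pser_mul f (pser_add g h) = pser_add (pser_mul f g) (pser_mul f h).
Proof.
apply: functional_extensionality => k.
rewrite /pser_add /pser_mul -big_split /=.
by apply: eq_bigr => j _; rewrite mulrDr.
Qed.

Lemma pser_truncS f N :
  pser_trunc f N.+1 = pser_add (pser_trunc f N) (pser_mono N (f N)).
Proof.
apply: functional_extensionality => k.
rewrite /pser_add /pser_trunc /pser_mono ltnS.
by case: ltngtP => [//|//|->]; rewrite ?addr0 ?add0r.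
Qed.

Lemma pser_mono_tS n : pser_mono n.+1 1 = pser_mul (pser_t R) (pser_mono n 1).
Proof.
apply: functional_extensionality => k; rewrite pser_mul_mono /pser_mono /pser_t.
case: leqP => nk; rewrite ?mulr1.
  by have -> : (k - n == 1)%N = (k == n.+1) by apply/eqP/eqP; lia.
by have -> : (k == n.+1) = false by apply/eqP; lia.
Qed.

Lemma pser_mono_C m r : pser_mono m r = pser_mul (pser_C r) (pser_mono m 1).
Proof.
apply: functional_extensionality => k; rewrite pser_mul_mono /pser_mono /pser_C.
case: leqP => mk; rewrite ?mulr1.
  by have -> : (k - m == 0)%N = (k == m) by apply/eqP/eqP; lia.
by have -> : (k == m) = false by apply/eqP; lia.
Qed.

End PowerSeries.

Section TateModule.
Variables (R : pzRingType) (M : lmodType R) (op : (M -> Prop) -> Prop).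
Variables (P : lmodType R) (Q : lmodType R^c).
Variables (i : M -> P * (Q -> R)) (p : P * (Q -> R) -> M).
Hypothesis topM : top_lmod op.
Hypothesis i_rdual : forall m, rdual (i m).2.
Hypothesis i_linear :
  forall r m m', i (r *: m + m') = ts_add (ts_scale r (i m)) (i m').
Hypothesis p_linear : forall r x y, rdual x.2 -> rdual y.2 ->
  p (ts_add (ts_scale r x) y) = r *: p x + p y.
Hypothesis i_cont : cont op (prod_top (@discrete_top P) (@pointwise_top Q R)) i.
Hypothesis p_cont : cont_on (prod_top (@discrete_top P) (@pointwise_top Q R))
  (fun x => rdual x.2) op p.
Hypothesis iK : cancel i p.

Let top_op : topology op.
Proof. by case: topM. Qed.

Definition i1 (m : M) : P := (i m).1.
Definition i2 (q : Q) (m : M) : R^o := (i m).2 q.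

Fact i1_is_linear : linear i1.
Proof. by move=> r m m'; rewrite /i1 i_linear. Qed.
HB.instance Definition _ := GRing.isLinear.Build R M P *:%R i1 i1_is_linear.

Fact i2_is_linear q : linear (i2 q).
Proof. by move=> r m m'; rewrite /i2 i_linear. Qed.
HB.instance Definition _ q :=
  GRing.isLinear.Build R M R^o *:%R (i2 q) (i2_is_linear q).

(* [perp F] is the preimage under [i] of the basic neighbourhood [0 (+) F^perp]
   of [P (+) Q^*]. *)
Definition perp (F : seq Q) (m : M) : Prop :=
  i1 m = 0 /\ {in F, forall q, i2 q m = 0}.

Lemma perp_submod F : submod (perp F).
Proof.
split.
- by split=> [|q _]; rewrite linear0.
- move=> x y [x1 x2] [y1 y2]; split=> [|q qF]; rewrite linearD /=.
    by rewrite x1 y1 addr0.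
  by rewrite x2 ?y2 ?addr0.
- move=> r x [x1 x2]; split=> [|q qF]; rewrite linearZ_LR /=.
    by rewrite x1 scaler0.
  by rewrite x2 ?scaler0.
Qed.

Lemma perp0 F : perp F 0.
Proof. by case: (perp_submod F). Qed.

Lemma perpD F a b : perp F a -> perp F b -> perp F (a + b).
Proof. by case: (perp_submod F) => _ perpD _; apply: perpD. Qed.

Lemma perpZ F r a : perp F a -> perp F (r *: a).
Proof. by case: (perp_submod F) => _ _ perpZ; apply: perpZ. Qed.

Lemma perpB F a b : perp F a -> perp F b -> perp F (a - b).
Proof. by move=> Fa Fb; rewrite -scaleN1r; apply/perpD/perpZ. Qed.

Lemma perp_sum F (I : eqType) (s : seq I) (f : I -> M) :
  (forall j, j \in s -> perp F (f j)) -> perp F (\sum_(j <- s) f j).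
Proof.
move=> Ff; rewrite big_seq; apply: (big_ind (perp F)) => //.
- exact: perp0.
- exact: perpD.
Qed.

Lemma perp_catl F G m : perp (F ++ G) m -> perp F m.
Proof. by case=> m1 m2; split=> // q qF; apply: m2; rewrite mem_cat qF. Qed.

Lemma perp_catr F G m : perp (F ++ G) m -> perp G m.
Proof.
by case=> m1 m2; split=> // q qG; apply: m2; rewrite mem_cat qG orbT.
Qed.

Lemma perpBP F m a :
  perp F (m - a) <-> i1 m = i1 a /\ {in F, forall q, i2 q m = i2 q a}.
Proof.
rewrite /perp linearB /=; split=> -[m1 m2]; split.
- exact: subr0_eq.
- by move=> q qF; apply: subr0_eq; have := m2 q qF; rewrite linearB.
- by rewrite m1 subrr.
- by move=> q qF; rewrite linearB /= m2 ?subrr.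
Qed.

Lemma perp_eq a b : (forall q, perp [:: q] (a - b)) -> a = b.
Proof.
move=> ab; apply: (can_inj iK); apply: injective_projections.
  by have /perpBP[] := ab 0.
apply: functional_extensionality => q.
by have /perpBP[_ /(_ q (mem_head _ _))] := ab q.
Qed.

Lemma open_perp F a : op (fun m => perp F (m - a)).
Proof.
pose V (z : P * (Q -> R)) := z.1 = i1 a /\ {in F, forall q, z.2 q = i2 q a}.
have openV : prod_top (@discrete_top P) (@pointwise_top Q R) V.
  move=> z [z1 z2]; exists (eq^~ z.1), (fun g => {in F, forall q, g q = z.2 q}).
  split=> //.
  - by move=> g g_z2; exists F => h hg q qF; rewrite hg ?g_z2.
  - by move=> y y1 y2; split=> [|q qF]; [rewrite y1 | rewrite y2 ?z2].
by apply: (open_ext top_op _ (i_cont openV)) => m; rewrite perpBP.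
Qed.

Lemma p_nbhs W y : op W -> rdual y.2 -> W (p y) -> exists qs : seq Q,
  forall z, rdual z.2 -> z.1 = y.1 -> {in qs, forall q, z.2 q = y.2 q} ->
  W (p z).
Proof.
move=> openW y2 Wy; have [U openU UW] := p_cont openW.
have [|U1 [V1 [_ openV1 U1y V1y UV]]] := openU y; first exact/UW.
have [qs qsV] := openV1 _ V1y.
exists qs => z z2 z1 zy; apply/UW => //.
by apply: UV; [rewrite z1 | apply: qsV].
Qed.

Lemma open_nbhs_perp W a : op W -> W a ->
  exists F, forall m, perp F (m - a) -> W m.
Proof.
move=> openW Wa.
have [|F FW] := p_nbhs (y := i a) openW (i_rdual a); first by rewrite iK.
by exists F => m /perpBP[m1 m2]; rewrite -(iK m); apply: FW.
Qed.

Lemma perp_nbhs_open W :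
  (forall a, W a -> exists F, forall m, perp F (m - a) -> W m) -> op W.
Proof.
move=> nbhsW.
pose nbhs U :=
  exists a F, U = (fun m => perp F (m - a)) /\ forall m, U m -> W m.
apply: (open_ext top_op _ (@open_bigU _ _ top_op nbhs _)).
  move=> m; split=> [[U [a [F [_ UW]]] /UW //]|Wm].
  have [F FW] := nbhsW m Wm.
  exists (fun x => perp F (x - m)); last by rewrite subrr; apply: perp0.
  by exists m, F.
by move=> U [a [F [-> _]]]; apply: open_perp.
Qed.

Lemma open_submod_perp L : op L -> L 0 -> exists F, forall m, perp F m -> L m.
Proof.
move=> openL L0; have [F FL] := open_nbhs_perp openL L0.
by exists F => m Fm; apply: FL; rewrite subr0.
Qed.

Lemma submod_perp_open L F : submod L -> (forall m, perp F m -> L m) -> op L.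
Proof.
move=> [_ LD _] FL; apply: perp_nbhs_open => a La; exists F => m ma.
by rewrite -(subrK a m); apply: LD => //; apply: FL.
Qed.

Definition converges (s : nat -> M) (a : M) :=
  forall F, eventually (fun n => perp F (s n - a)).

Lemma converges_unique s a b : converges s a -> converges s b -> a = b.
Proof.
move=> sa sb; apply: perp_eq => q.
have [N /(_ N (leqnn N)) [sNa sNb]] := eventually_and (sa [:: q]) (sb [:: q]).
have -> : a - b = (s N - b) - (s N - a) by rewrite opprB [RHS]addrC addrA subrK.
exact: perpB.
Qed.

Lemma converges_ext s s' a : s =1 s' -> converges s a -> converges s' a.
Proof. by move=> ss' sa F; apply: eventually_mono (sa F) => n; rewrite ss'. Qed.

Lemma converges_shift s a m :
  converges s a -> converges (fun n => s (n + m)%N) a.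
Proof.
move=> sa F; have [N sN] := sa F; exists N => n Nn; apply: sN.
exact: leq_trans Nn (leq_addr _ _).
Qed.

Lemma converges_stationary s a : eventually (fun n => s n = a) -> converges s a.
Proof.
by move=> sa F; apply: eventually_mono sa => n ->; rewrite subrr; apply: perp0.
Qed.

Lemma convergesD s s' a b : converges s a -> converges s' b ->
  converges (fun n => s n + s' n) (a + b).
Proof.
move=> sa s'b F; apply: eventually_mono (eventually_and (sa F) (s'b F)).
by move=> n [san s'bn]; rewrite opprD addrACA; apply: perpD.
Qed.

Lemma converges_perp s a F : converges s a ->
  eventually (fun n => perp F (s n)) -> perp F a.
Proof.
move=> sa sF; have [N /(_ N (leqnn N)) [saN sFN]] := eventually_and (sa F) sF.
by rewrite -(subKr (s N) a); apply: perpB.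
Qed.

(* The limit is assembled coordinatewise in [P (+) Q^*]: every coordinate of
   [i (s n)] is eventually constant. *)
Lemma cauchy_converges s :
  (forall F, exists N, forall n, (N <= n)%N -> perp F (s n - s N)) ->
  exists a, converges s a.
Proof.
move=> cauchy.
have [N0 N0s] := cauchy [::].
have [Nq Nqs] : exists Nq : Q -> nat,
    forall q n, (Nq q <= n)%N -> i2 q (s n) = i2 q (s (Nq q)).
  apply: (choice (fun q N => forall n, (N <= n)%N -> i2 q (s n) = i2 q (s N))).
  move=> q; have [N Ns] := cauchy [:: q]; exists N => n /Ns /perpBP[_].
  by apply; rewrite mem_head.
pose y := (i1 (s N0), fun q => i2 q (s (Nq q))).
have y2 : rdual y.2.
  move=> r x z /=; pose n := maxn (Nq x) (maxn (Nq z) (Nq (r *: x + z)%R)).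
  rewrite -(Nqs x n) ?leq_maxl // -(Nqs z n); last by rewrite !leq_max leqnn orbT.
  by rewrite -(Nqs _ n) ?leq_max ?leqnn ?orbT //; apply: i_rdual.
exists (p y) => F.
have [|qs qsF] := p_nbhs (open_perp F (p y)) y2.
  by rewrite subrr; apply: perp0.
exists (maxn N0 (\max_(q <- qs) Nq q)) => n; rewrite geq_max => /andP[N0n qsn].
rewrite -(iK (s n)); apply: qsF => //=.
  by have /perpBP[] := N0s n N0n.
move=> q qsq; apply: Nqs; apply: leq_trans qsn.
exact: leq_bigmax_seq.
Qed.

Definition lim (s : nat -> M) : M := epsilon (inhabits 0) (converges s).

Lemma lim_converges s : (exists a, converges s a) -> converges s (lim s).
Proof. exact: epsilon_spec. Qed.

Lemma lim_eq s a : converges s a -> lim s = a.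
Proof.
by move=> sa; apply: (converges_unique _ sa); apply: lim_converges; exists a.
Qed.

Section DualCoordinates.
Variables (phi : Q -> Q -> R^c) (supp : Q -> seq Q).
Hypothesis supp_uniq : forall x, uniq (supp x).
Hypothesis phi_supp : forall x j, j \notin supp x -> phi j x = 0.
Hypothesis phi_linear :
  forall j r x y, phi j (r *: x + y) = r * phi j x + phi j y.
Hypothesis phi_decomp : forall x, x = \sum_(j <- supp x) phi j x *: j.

(* Read in [R], so that products with [coord] are not taken in [R^c]. *)
Definition coord (j x : Q) : R := phi j x.

(* [lift_dual c] is the element [sum_j c j * phi_j] of [Q^*]: a retraction of
   [R^Q] onto [Q^*], along which [Q^*] inherits the lattices of the product
   [R^Q]. *)
Definition lift_dual (c : Q -> R) (x : Q) : R :=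
  \sum_(j <- supp x) c j * coord j x.

Lemma lift_dual_superset (s : seq Q) c x : uniq s -> {subset supp x <= s} ->
  \sum_(j <- s) c j * coord j x = lift_dual c x.
Proof.
move=> s_uniq supp_s.
rewrite -(big_rmcond_in _ (P := fun j => j \in supp x)); last first.
  by move=> j _ /phi_supp; rewrite /coord => ->; rewrite mulr0.
rewrite -big_filter; apply/perm_big/uniq_perm; rewrite ?filter_uniq //.
by move=> j; rewrite mem_filter andb_idr //; apply: supp_s.
Qed.

Lemma lift_dual_rdual c : rdual (lift_dual c).
Proof.
move=> r x y; pose s := undup (supp (r *: x + y) ++ supp x ++ supp y).
have s_uniq : uniq s by apply: undup_uniq.
have s1 : {subset supp (r *: x + y) <= s}.
  by move=> j js; rewrite mem_undup mem_cat js.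
have s2 : {subset supp x <= s}.
  by move=> j js; rewrite mem_undup !mem_cat js orbT.
have s3 : {subset supp y <= s}.
  by move=> j js; rewrite mem_undup !mem_cat js !orbT.
rewrite -(lift_dual_superset c s_uniq s1) -(lift_dual_superset c s_uniq s2).
rewrite -(lift_dual_superset c s_uniq s3).
rewrite mulr_suml -big_split /=; apply: eq_bigr => j _.
by rewrite /coord phi_linear mulrDr mulrA.
Qed.

Lemma lift_dual_id g : rdual g -> lift_dual g = g.
Proof.
move=> g2; apply: functional_extensionality => x.
by rewrite [in RHS](phi_decomp x) rdual_sum.
Qed.

Lemma lift_dual_comb r c d x :
  lift_dual (fun j => r * c j + d j) x = r * lift_dual c x + lift_dual d x.
Proof.
rewrite /lift_dual mulr_sumr -big_split /=; apply: eq_bigr => j _.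
by rewrite mulrDl mulrA.
Qed.

Lemma lift_dual_eq0 c x : {in supp x, forall j, c j = 0} -> lift_dual c x = 0.
Proof.
by move=> c0; rewrite /lift_dual big1_seq // => j /andP[_ /c0 ->]; rewrite mul0r.
Qed.

Definition pcoord (c : Q -> R) : M := p (0, lift_dual c).

Lemma pcoord_comb r c d :
  pcoord (fun j => r * c j + d j) = r *: pcoord c + pcoord d.
Proof.
rewrite /pcoord -p_linear; [congr p | exact: lift_dual_rdual..].
rewrite /ts_add /ts_scale /= scaler0 addr0; congr pair.
by apply: functional_extensionality => x; rewrite lift_dual_comb.
Qed.

Lemma pcoord0 : pcoord (fun _ => 0) = 0.
Proof.
apply: (@addrI _ (pcoord (fun _ => 0))); rewrite addr0 -[X in X + _]scale1r.
rewrite -pcoord_comb; congr pcoord.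
by apply: functional_extensionality => j; rewrite mulr0 addr0.
Qed.

Lemma pcoord_sum (I : Type) (s : seq I) (a : I -> R) (d : I -> Q -> R) :
  pcoord (fun k => \sum_(j <- s) a j * d j k) =
  \sum_(j <- s) a j *: pcoord (d j).
Proof.
elim: s => [|j s ih].
  rewrite big_nil -pcoord0; congr pcoord.
  by apply: functional_extensionality => k; rewrite big_nil.
rewrite big_cons -ih -pcoord_comb; congr pcoord.
by apply: functional_extensionality => k; rewrite big_cons.
Qed.

Lemma pcoord_nbhs W : op W -> W 0 ->
  exists G : seq Q, forall c, {in G, forall j, c j = 0} -> W (pcoord c).
Proof.
move=> openW W0.
have [|qs qsW] :=
  p_nbhs (y := (0, lift_dual (fun _ => 0))) openW (lift_dual_rdual _).
  by have := pcoord0; rewrite /pcoord => ->.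
exists (flatten (map supp qs)) => c c0.
apply: qsW => //= [|q qsq]; first exact: lift_dual_rdual.
rewrite !lift_dual_eq0 // => j jq; apply: c0; apply/flattenP.
by exists (supp q); rewrite ?map_f.
Qed.

Definition coord_lattice (G : seq Q) (m : M) : Prop :=
  exists2 c : Q -> R, {in G, forall j, c j = 0} & m = pcoord c.

Lemma coord_lattice_submod G : submod (coord_lattice G).
Proof.
split.
- by exists (fun _ => 0); rewrite ?pcoord0.
- move=> _ _ [c cG ->] [d dG ->]; exists (fun j => 1 * c j + d j).
    by move=> j jG; rewrite cG ?dG ?mulr0 ?addr0.
  by rewrite pcoord_comb scale1r.
- move=> r _ [c cG ->]; exists (fun j => r * c j + 0).
    by move=> j jG; rewrite cG ?mulr0 ?addr0.
  by rewrite (pcoord_comb r c (fun _ => 0)) pcoord0 addr0.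
Qed.

Lemma perp_coord_lattice G m : perp G m -> coord_lattice G m.
Proof.
case=> m1 m2; exists (i m).2 => // ; rewrite /pcoord lift_dual_id //.
by rewrite -{1}(iK m); congr p; apply: injective_projections.
Qed.

Definition delta (j k : Q) : R := (k == j)%:R.

Lemma sum_delta (s : seq Q) (c : Q -> R) k : uniq s ->
  \sum_(j <- s) c j * delta j k = if k \in s then c k else 0.
Proof.
elim: s => [|j s ih] //=; first by rewrite big_nil.
rewrite big_cons in_cons => /andP[js s_uniq]; rewrite ih // /delta.
by case: eqP => [->|_]; rewrite ?(negbTE js) ?mulr1 ?addr0 // mulr0 add0r.
Qed.

Lemma coord_lattice_fg G U : submod U -> op U -> fg_quot (coord_lattice G) U.
Proof.
case=> U0 _ _ openU; have [G' G'U] := pcoord_nbhs openU U0.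
pose s := [seq j <- undup G' | j \notin G].
have s_uniq : uniq s by rewrite filter_uniq ?undup_uniq.
apply: (@fg_quot_seq _ _ _ _ _ 0 s (fun j => pcoord (delta j))).
  move=> j; rewrite mem_filter => /andP[jG _]; exists (delta j) => // k kG.
  by rewrite /delta; case: eqP kG jG => // -> ->.
move=> _ [c cG ->]; exists c, (pcoord (fun k => if k \in G' then 0 else c k)).
  by apply: G'U => k ->.
rewrite -pcoord_sum -[X in X + _]scale1r -pcoord_comb; congr pcoord.
apply: functional_extensionality => k.
rewrite mul1r sum_delta // mem_filter mem_undup.
case: (boolP (k \in G')) => kG'; rewrite ?andbF ?add0r ?andbT ?addr0 //.
by case: (boolP (k \in G)) => //= kG; rewrite cG.
Qed.

Lemma coord_lattice_lattice G : lattice op (coord_lattice G).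
Proof.
split; first exact: coord_lattice_submod.
  exact: submod_perp_open (coord_lattice_submod G) (@perp_coord_lattice G).
by move=> U subU openU _; apply: coord_lattice_fg.
Qed.

Lemma coord_lattice_perp F : exists G, forall m, coord_lattice G m -> perp F m.
Proof.
have [|G GF] := pcoord_nbhs (open_perp F 0).
  by rewrite subrr; apply: perp0.
by exists G => _ [c cG ->]; rewrite -[pcoord c]subr0; apply: GF.
Qed.

End DualCoordinates.

Lemma lattice_in_perp F : projective Q ->
  exists L, lattice op L /\ forall m, L m -> perp F m.
Proof.
move=> /projective_dual_basis[phi [supp [supp_uniq phi_supp phi_linear decomp]]].
have [G GF] := coord_lattice_perp supp_uniq phi_supp phi_linear F.
exists (coord_lattice phi supp G); split=> //.
exact: coord_lattice_lattice supp_uniq phi_supp phi_linear decomp G.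
Qed.

Lemma lattice_perp L : lattice op L -> exists F, forall m, perp F m -> L m.
Proof. by case=> -[L0 _ _] openL _; apply: open_submod_perp. Qed.

Lemma lattice_add_line L x : lattice op L -> lattice op (add_line L x).
Proof.
move=> latL; have [F FL] := lattice_perp latL.
case: latL => subL openL fgL; have L0 : L 0 by case: subL.
split; first exact: add_line_submod.
  apply: submod_perp_open (add_line_submod x subL) _ => m /FL Lm.
  by exists m, 0; rewrite scale0r addr0.
move=> U subU openU _; apply: fg_quot_add_line => //.
by apply: fgL; [exact: submodI | exact: (open_and top_op) | move=> m []].
Qed.

Section Endomorphism.
Variable T : {linear M -> M}.
Hypothesis T_cont : cont op op T.

Lemma perp_T_cont F : exists G, forall z, perp G z -> perp F (T z).
Proof.
have [|G GF] := open_nbhs_perp (T_cont (open_perp F 0)) (a := 0).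
  by rewrite /= linear0 subrr; apply: perp0.
by exists G => z Gz; rewrite -[T z]subr0; apply: GF; rewrite subr0.
Qed.

Lemma perp_iter_cont n F : exists G, forall z, perp G z -> perp F (iter n T z).
Proof.
elim: n F => [|n ih] F; first by exists F.
have [G1 G1F] := perp_T_cont F; have [G GG1] := ih G1.
by exists G => z /GG1 /G1F.
Qed.

Lemma perp_iter_cont_upto N F :
  exists G, forall n, (n <= N)%N -> forall z, perp G z -> perp F (iter n T z).
Proof.
elim: N => [|N [G GF]].
  by have [G GF] := perp_iter_cont 0 F; exists G => n; rewrite leqn0 => /eqP ->.
have [G' G'F] := perp_iter_cont N.+1 F; exists (G ++ G') => n.
rewrite leq_eqVlt => /predU1P[-> z /perp_catr/G'F //|nN z /perp_catl].
exact: GF.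
Qed.

Definition iter_vanishing :=
  forall x F, eventually (fun n => perp F (iter n T x)).

Definition iter_equicont :=
  forall F, exists G, forall n z, perp G z -> perp F (iter n T z).

Definition iter_tail_equicont := forall F, exists N G,
  forall n, (N <= n)%N -> forall z, perp G z -> perp F (iter n T z).

Lemma tends_to_zero_vanishing : projective Q -> tends_to_zero op T ->
  iter_vanishing.
Proof.
move=> projQ T0 x F.
have [L [latL LF]] := lattice_in_perp F projQ.
have [L0 [latL0 _]] := lattice_in_perp [::] projQ.
have L00 : L0 0 by case: latL0 => -[].
have [N NL] := T0 L _ latL (lattice_add_line x latL0).
exists N.+1 => n Nn; apply/LF/NL => //.
by exists 0, 1; rewrite scale1r add0r.
Qed.

Lemma tends_to_zero_equicont : projective Q -> tends_to_zero op T ->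
  iter_equicont.
Proof.
move=> projQ T0 F.
have [L [latL LF]] := lattice_in_perp F projQ.
have [L0 [latL0 _]] := lattice_in_perp [::] projQ.
have [N NL] := T0 L L0 latL latL0.
have [G0 G0L0] := lattice_perp latL0.
have [G1 G1F] := perp_iter_cont_upto N F.
exists (G0 ++ G1) => n z Gz; case: (leqP n N) => [nN | Nn].
  exact: G1F nN _ (perp_catr Gz).
exact/LF/NL/G0L0/(perp_catl Gz).
Qed.

Lemma vanishing_tail_tends_to_zero : iter_vanishing -> iter_tail_equicont ->
  tends_to_zero op T.
Proof.
move=> vanT tailT L L' latL latL'.
have [F FL] := lattice_perp latL.
have [N [G NG]] := tailT F.
case: latL' => subL' openL' fgL'.
have openG : op (perp G).
  by apply: (open_ext top_op _ (open_perp G 0)) => m; rewrite subr0.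
have [xs [L'xs xs_gen]] := fgL' _ (submodI subL' (perp_submod G))
  (open_and top_op openL' openG) (fun m => @proj1 _ _).
have [Nx Nxs] := eventually_all (fun y _ => vanT y F) (s := xs).
exists (maxn N Nx) => n; rewrite gtn_max => /andP[Nn Nxn].
move=> x /xs_gen[c [u [_ Gu] ->]].
apply: FL; rewrite linearD linear_sum /=; apply: perpD.
  apply: perp_sum => k _; rewrite linearZ_LR /=; apply: perpZ.
  by apply: Nxs; [apply: ltnW | apply: mem_nth].
by apply: NG => //; apply: ltnW.
Qed.

Definition partial_sum (f : nat -> R) (x : M) (N : nat) : M :=
  \sum_(0 <= n < N) f n *: iter n T x.

Section SeriesAction.
Hypotheses (vanT : iter_vanishing) (equiT : iter_equicont).

Definition pser_act (f : nat -> R) (x : M) : M := lim (partial_sum f x).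

Lemma pser_act_converges f x : converges (partial_sum f x) (pser_act f x).
Proof.
apply/lim_converges/cauchy_converges => F; have [N NF] := vanT x F.
exists N => n Nn.
rewrite /partial_sum (big_cat_nat (leq0n N) Nn) /= addrC addrK.
by apply: perp_sum => k; rewrite mem_index_iota => /andP[Nk _]; apply/perpZ/NF.
Qed.

Lemma pser_act_eq f x a : converges (partial_sum f x) a -> pser_act f x = a.
Proof. exact: lim_eq. Qed.

Lemma pser_actDr f x y : pser_act f (x + y) = pser_act f x + pser_act f y.
Proof.
apply/pser_act_eq/(converges_ext _ (convergesD (pser_act_converges f x)
  (pser_act_converges f y))) => n.
rewrite /partial_sum -big_split; apply: eq_bigr => k _.
by rewrite linearD scalerDr.
Qed.

Lemma pser_actDl f g x :
  pser_act (pser_add f g) x = pser_act f x + pser_act g x.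
Proof.
apply/pser_act_eq/(converges_ext _ (convergesD (pser_act_converges f x)
  (pser_act_converges g x))) => n.
by rewrite /partial_sum -big_split; apply: eq_bigr => k _; rewrite scalerDl.
Qed.

Lemma pser_act0r f : pser_act f 0 = 0.
Proof.
apply/pser_act_eq/converges_stationary; exists 0 => n _.
by rewrite /partial_sum big1 // => k _; rewrite linear0 scaler0.
Qed.

Lemma pser_act0l x : pser_act (fun _ => 0) x = 0.
Proof.
apply/pser_act_eq/converges_stationary; exists 0 => n _.
by rewrite /partial_sum big1 // => k _; rewrite scale0r.
Qed.

Lemma pser_act_mono m r x : pser_act (pser_mono m r) x = r *: iter m T x.
Proof.
apply/pser_act_eq/converges_stationary; exists m.+1 => n mn.
rewrite /partial_sum (bigD1_seq m) ?mem_index_iota ?iota_uniq //=.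
rewrite /pser_mono eqxx.
by rewrite big1 ?addr0 // => k /negbTE ->; rewrite scale0r.
Qed.

Lemma pser_act_perp F f z :
  (forall n, perp F (f n *: iter n T z)) -> perp F (pser_act f z).
Proof.
move=> Ff; apply: converges_perp (pser_act_converges f z) _.
by exists 0 => n _; apply: perp_sum => k _; apply: Ff.
Qed.

Lemma pser_act_equicont F :
  exists G, forall f z, perp G z -> perp F (pser_act f z).
Proof.
have [G GF] := equiT F; exists G => f z Gz; apply: pser_act_perp => n.
exact/perpZ/GF.
Qed.

Lemma pser_act_tail x F : exists N,
  forall f, (forall k, (k < N)%N -> f k = 0) -> perp F (pser_act f x).
Proof.
have [N NF] := vanT x F; exists N => f f0; apply: pser_act_perp => n.
by case: (ltnP n N) => [/f0 -> | /NF /perpZ //]; rewrite scale0r; apply: perp0.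
Qed.

Lemma pser_act_mono_iter f m r x :
  pser_act f (r *: iter m T x) = pser_act (pser_mul f (pser_mono m r)) x.
Proof.
apply/pser_act_eq.
apply: (converges_ext _ (converges_shift m (pser_act_converges _ x))) => N.
rewrite /partial_sum (big_cat_nat (leq0n m) (leq_addl N m)) /=.
rewrite big1_seq ?add0r; last first.
  move=> k; rewrite mem_index_iota => /andP[_ km].
  by rewrite pser_mul_mono ifN ?scale0r // -ltnNge.
rewrite -{1}(add0n m) big_addn addnK; apply: eq_bigr => k _.
by rewrite pser_mul_mono leq_addl addnK linearZ_LR scalerA iterD.
Qed.

Lemma pser_act_partial_sum f g x N :
  pser_act f (partial_sum g x N) = pser_act (pser_mul f (pser_trunc g N)) x.
Proof.
elim: N => [|N ih].
  rewrite /partial_sum big_geq // pser_act0r -(pser_act0l x); congr pser_act.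
  apply: functional_extensionality => k.
  by rewrite /pser_mul big1 // => j _; rewrite /pser_trunc mulr0.
rewrite /partial_sum big_nat_recr //= -/(partial_sum g x N) pser_actDr ih.
by rewrite pser_act_mono_iter -pser_actDl -pser_mulDr -pser_truncS.
Qed.

Lemma pser_actM f g x : pser_act (pser_mul f g) x = pser_act f (pser_act g x).
Proof.
apply: perp_eq => q.
have [G GF] := pser_act_equicont [:: q].
have [N1 N1G] := pser_act_converges g x G.
have [N0 N0F] := pser_act_tail x [:: q].
pose N := maxn N1 N0.
have head_tail : pser_mul f g = pser_add (pser_mul f (pser_trunc g N))
    (pser_mul f (fun k => g k - pser_trunc g N k)).
  rewrite -pser_mulDr; congr pser_mul.
  by apply: functional_extensionality => k; rewrite /pser_add subrKC.
rewrite head_tail pser_actDl -pser_act_partial_sum.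
rewrite -[partial_sum g x N](subrK (pser_act g x)) pser_actDr addrAC addrK.
apply: perpD; first by apply/GF/N1G/leq_maxl.
apply: N0F => k kN; rewrite /pser_mul big1 // => j _.
have kjN : (k - j < N)%N.
  by rewrite (leq_ltn_trans (leq_subr _ _)) // (leq_trans kN) ?leq_maxr.
by rewrite /pser_trunc kjN subrr mulr0.
Qed.

Lemma pser_act_cont :
  cont (prod_top (@tadic_top R) op) op (fun z => pser_act z.1 z.2).
Proof.
move=> W openW [f0 x0] /= Wf0x0.
have [F FW] := open_nbhs_perp openW Wf0x0.
have [G GF] := pser_act_equicont F.
have [N NF] := pser_act_tail x0 F.
exists (fun g => forall k, (k < N)%N -> g k = f0 k), (fun y => perp G (y - x0)).
split=> //=.
- by move=> g gf0; exists N => h hg k kN; rewrite hg // gf0.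
- exact: open_perp.
- by rewrite subrr; apply: perp0.
move=> [g y] /= gf0 Gy; apply: FW.
have gE : pser_act g x0 = pser_act f0 x0 + pser_act (fun k => g k - f0 k) x0.
  rewrite -pser_actDl; congr pser_act.
  by apply: functional_extensionality => k; rewrite /pser_add subrKC.
rewrite -[y](subrK x0) pser_actDr gE addrA addrAC addrK.
by apply: perpD; [apply: GF | apply: NF => k kN; rewrite gf0 ?subrr].
Qed.

Lemma pser_act_structure : pser_structure op T pser_act.
Proof.
split; split.
- exact: pser_actDr.
- exact: pser_actDl.
- exact: pser_actM.
- by move=> x; rewrite -[pser_one R]/(pser_mono 0 1) pser_act_mono scale1r.
- by move=> r x; rewrite -[pser_C r]/(pser_mono 0 r) pser_act_mono.
- by move=> x; rewrite -[pser_t R]/(pser_mono 1 1) pser_act_mono scale1r.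
- exact: pser_act_cont.
Qed.

End SeriesAction.

Section GivenStructure.
Variable act : (nat -> R) -> M -> M.
Hypothesis act_struct : pser_structure op T act.

Lemma pser_structure_mono m r x : act (pser_mono m r) x = r *: iter m T x.
Proof.
case: act_struct => -[_ _ actM act1 actC] [actt _].
rewrite pser_mono_C actM actC; congr (_ *: _).
by elim: m x => [|m ih] x; [apply: act1 | rewrite pser_mono_tS actM ih actt].
Qed.

Lemma pser_structure_trunc f N x : act (pser_trunc f N) x = partial_sum f x N.
Proof.
case: act_struct => -[_ actDl _ _ _] _.
elim: N => [|N ih].
  have -> : pser_trunc f 0 = pser_mono 0 0.
    by apply: functional_extensionality => k; rewrite /pser_mono; case: eqP.
  by rewrite pser_structure_mono scale0r /partial_sum big_geq.
by rewrite pser_truncS actDl ih pser_structure_mono /partial_sum big_nat_recr.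
Qed.

Lemma pser_structure_near f x F : exists N, forall g,
  (forall k, (k < N)%N -> g k = f k) -> perp F (act g x - act f x).
Proof.
case: act_struct => _ [_ act_cont].
have [|U [V [openU _ Uf Vx UV]]] := act_cont _ (open_perp F (act f x)) (f, x).
  by rewrite subrr; apply: perp0.
have [N NU] := openU f Uf; exists N => g gf.
exact: (UV (g, x) (NU g gf) Vx).
Qed.

Lemma pser_structure_converges f x : converges (partial_sum f x) (act f x).
Proof.
move=> F; have [N NF] := pser_structure_near f x F; exists N => n Nn.
rewrite -pser_structure_trunc; apply: NF => k kN.
by rewrite /pser_trunc (leq_trans kN Nn).
Qed.

Lemma pser_structure_vanishing : iter_vanishing.
Proof.
move=> x F; have [N NF] := pser_structure_near (pser_mono 0 0) x F.
exists N => n Nn; have := NF (pser_mono n 1).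
rewrite !pser_structure_mono scale1r scale0r subr0; apply.
by move=> k kN; rewrite /pser_mono (ltn_eqF (leq_trans kN Nn)); case: eqP.
Qed.

Lemma pser_structure_tail_equicont : iter_tail_equicont.
Proof.
case: act_struct => _ [_ act_cont] F.
have [|U [V [openU openV U0 V0 UV]]] :=
  act_cont _ (open_perp F 0) (pser_mono 0 0, 0).
  by rewrite /= pser_structure_mono scale0r subrr; apply: perp0.
have [N NU] := openU _ U0; have [G GV] := open_nbhs_perp openV V0.
exists N, G => n Nn z Gz; have := UV (pser_mono n 1, z).
rewrite /= pser_structure_mono scale1r subr0.
apply; last by apply: GV; rewrite subr0.
apply: NU => k kN.
by rewrite /pser_mono /= (ltn_eqF (leq_trans kN Nn)); case: eqP.
Qed.

Lemma pser_structure_tends_to_zero : tends_to_zero op T.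
Proof.
exact: vanishing_tail_tends_to_zero pser_structure_vanishing
  pser_structure_tail_equicont.
Qed.

End GivenStructure.

Lemma pser_structure_unique act act' :
  pser_structure op T act -> pser_structure op T act' ->
  forall f x, act' f x = act f x.
Proof.
move=> act_struct act'_struct f x.
exact: converges_unique (pser_structure_converges act'_struct f x)
  (pser_structure_converges act_struct f x).
Qed.

Lemma tends_to_zero_pser_structure : projective Q -> tends_to_zero op T ->
  exists act, pser_structure op T act /\
    forall act', pser_structure op T act' -> forall f x, act' f x = act f x.
Proof.
move=> projQ T0.
have act_struct := pser_act_structure (tends_to_zero_vanishing projQ T0)
  (tends_to_zero_equicont projQ T0).
by exists pser_act; split=> // act' act'_struct; apply: pser_structure_unique.
Qed.

End Endomorphism.
End TateModule.

Theorem lemma3p9 (R : pzRingType) (M : lmodType R) (op : (M -> Prop) -> Prop)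
  (T : {linear M -> M}) :
  tate op -> cont op op T ->
  (tends_to_zero op T <->
   exists act : (nat -> R) -> M -> M,
     pser_structure op T act /\
     forall act', pser_structure op T act' -> forall f x, act' f x = act f x).
Proof.
move=> [topM [P [Q [i [p [[_ projQ i_rdual i_linear p_linear] [i_cont p_cont iK]]]]]]]
  T_cont.
split=> [T0 | [act [act_struct _]]].
  exact: (tends_to_zero_pser_structure topM i_rdual i_linear p_linear i_cont p_cont iK
    T_cont projQ T0).
exact: (pser_structure_tends_to_zero topM i_rdual i_linear i_cont p_cont iK act_struct).
Qed.
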